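(* A fragment $F$ in the wait state which has a neighbor fragment $F'$ in the work state may enter the work state only after $F'$ has changed its state to the wait state.
   Context: A broadcast network is modeled as a connected graph G(V,E) with n nodes. In the fragment-level leader election algorithm, nodes are partitioned into fragments each with a candidate; id(F) = (size, candidate identity) ordered lexicographically; an external edge between F1 and F2 with id(F1) > id(F2) is outgoing for F1 and incoming for F2. Initially each node is a size-1 fragment in state wait. A fragment with an outgoing edge is in wait; a fragment in wait whose external edges are all incoming moves to work, where it counts its size new_size and compares with its maximal neighbor F'': if new_size > X · size(F'') (X > 1) it remains active, updates its size, makes all external edges outgoing and returns to wait; otherwise it joins F''. A fragment with no external edges is the leader. It has been shown that a fragment that was in work and remained active re-enters work only after each of its neighboring fragments has been in the work state. *)

(* Abstract model of the fragment-level leader election algorithm. *)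
From HB Require Import structures.
From mathcomp Require Import all_boot all_order all_algebra.
Set Implicit Arguments. Unset Strict Implicit. Unset Printing Implicit Defensive.
Import Order.TTheory GRing.Theory Num.Theory.

Inductive fstate := Wait | Work.

(* A global configuration on the node set 'I_n.
   - frag v  : the candidate of the fragment containing node v
               (a node x is the candidate of a fragment iff frag x = x);
   - fsize x : the size recorded by (the fragment of) candidate x;
   - fst x   : the state of (the fragment of) candidate x. *)
Record config (n : nat) := Config {
  frag : 'I_n -> 'I_n;
  fsize : 'I_n -> nat;
  fst : 'I_n -> fstate }.

Section Model.
Variable n : nat.
Variable adj : rel 'I_n.

Definition upd {A : Type} (f : 'I_n -> A) (x : 'I_n) (a : A) : 'I_n -> A :=
  fun y => if y == x then a else f y.

Definition init_config : config n := Config (fun v => v) (fun _ => 1%N) (fun _ => Wait).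

Definition is_frag (c : config n) (x : 'I_n) : Prop := frag c x = x.

(* id(F) = (size, candidate identity), lexicographic strict order *)
Definition fid_lt (c : config n) (x y : 'I_n) : Prop :=
  (fsize c x < fsize c y)%N \/ (fsize c x = fsize c y /\ (x < y)%N).

Definition neighbor (c : config n) (x y : 'I_n) : Prop :=
  is_frag c x /\ is_frag c y /\ x <> y /\
  exists u v, adj u v /\ frag c u = x /\ frag c v = y.

Definition frag_count (c : config n) (x : 'I_n) : nat :=
  #|[set v | frag c v == x]|.

Definition max_neighbor (c : config n) (x d : 'I_n) : Prop :=
  neighbor c x d /\ forall e, neighbor c x e -> e = d \/ fid_lt c e d.

Variable R : realFieldType.
Variable X : R.

Inductive step (c : config n) : config n -> Prop :=
| step_start x :
    (* wait -> work: all external edges of x are incoming (x not the leader) *)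
    is_frag c x -> fst c x = Wait ->
    (exists y, neighbor c x y) ->
    (forall y, neighbor c x y -> fid_lt c x y) ->
    step c (Config (frag c) (fsize c) (upd (fst c) x Work))
| step_active x d :
    is_frag c x -> fst c x = Work -> max_neighbor c x d ->
    (X * (fsize c d)%:R < (frag_count c x)%:R)%R ->
    step c (Config (frag c) (upd (fsize c) x (frag_count c x)) (upd (fst c) x Wait))
| step_join x d :
    is_frag c x -> fst c x = Work -> max_neighbor c x d ->
    ~ (X * (fsize c d)%:R < (frag_count c x)%:R)%R ->
    step c (Config (fun v => if frag c v == x then d else frag c v) (fsize c) (fst c)).

(* An (asynchronous, interleaved) execution from the initial configuration;
   stuttering steps are allowed. *)
Definition execution (e : nat -> config n) : Prop :=
  e 0%N = init_config /\ forall k, step (e k) (e k.+1) \/ e k.+1 = e k.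

Definition in_work (c : config n) (x : 'I_n) : Prop := is_frag c x /\ fst c x = Work.
Definition in_wait (c : config n) (x : 'I_n) : Prop := is_frag c x /\ fst c x = Wait.

End Model.

From mathcomp Require Import all_boot all_algebra zify.
From Stdlib Require Import Classical.
Set Implicit Arguments.

(* Every step preserves the invariant that a working fragment has only
   incoming external edges, i.e. is smaller (in id) than all of its
   neighbours.  Hence two neighbouring fragments are never both at work.
   If F' stayed at work until F starts working, F would be a waiting
   neighbour of F' with only incoming edges, so F < F' < F.  So F' leaves
   the work state before, and a working fragment can only leave it by
   returning to wait or by joining a neighbour that is itself waiting. *)

Lemma fid_lt_asym n (c : config n) x y : fid_lt c x y -> ~ fid_lt c y x.
Proof. by rewrite /fid_lt => [[?|[? ?]] [?|[? ?]]]; lia. Qed.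

Lemma first_exit (P : nat -> Prop) t t' :
  P t -> ~ (forall k, (t <= k <= t')%N -> P k) ->
  exists s, [/\ (t <= s < t')%N, forall k, (t <= k <= s)%N -> P k & ~ P s.+1].
Proof.
move=> Pt; elim: t' => [|t' IH] notP.
  by exfalso; apply: notP => k hk; have -> : k = t by lia.
have [allP | /IH [s [lt_s Ps notPs]]] :=
  classic (forall k, (t <= k <= t')%N -> P k); last by exists s; split=> //; lia.
have le_tt' : (t <= t')%N.
  by rewrite leqNgt; apply/negP => lt_t't; apply: notP => k hk; have -> : k = t by lia.
exists t'; split=> //; first lia.
move=> Pt'; apply: notP => k hk.
case: (ltnP k t'.+1) => hk'; first by apply: allP; lia.
by have -> : k = t'.+1 by lia.
Qed.

Section Invariant.

Variables (n : nat) (adj : rel 'I_n) (R : realFieldType) (X : R).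
Hypothesis adj_sym : symmetric adj.

Definition step_or_stay (c c' : config n) := step adj X c c' \/ c' = c.

Definition work_incoming (c : config n) :=
  forall x y, in_work c x -> neighbor adj c x y -> fid_lt c x y.

Lemma neighbor_sym (c : config n) x y : neighbor adj c x y -> neighbor adj c y x.
Proof.
move=> [fx [fy [ne [u [v [a [hu hv]]]]]]].
by do !split=> //; [move=> /esym | exists v, u; rewrite adj_sym].
Qed.

Lemma work_incoming_no_work_neighbor (c : config n) x y :
  work_incoming c -> in_work c x -> neighbor adj c x y -> ~ in_work c y.
Proof.
move=> inc wx nxy wy.
exact: fid_lt_asym (inc _ _ wx nxy) (inc _ _ wy (neighbor_sym nxy)).
Qed.

Lemma is_frag_prev (c c' : config n) z :
  step_or_stay c c' -> is_frag c' z -> is_frag c z.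
Proof.
case=> [[x|x d|x d fx wx maxd _] | ->] //.
by rewrite /is_frag /=; case: eqP => // _ <-; case: maxd => [[_ []]].
Qed.

Lemma neighbor_next (c c' : config n) a b :
  step_or_stay c c' -> is_frag c' a -> is_frag c' b ->
  neighbor adj c a b -> neighbor adj c' a b.
Proof.
case=> [[x|x d|x d fx wx maxd _] | ->] //.
move=> fa fb [_ [_ [ne [u [v [uv [hu hv]]]]]]].
have not_x w : is_frag (Config (fun v => if frag c v == x then d else frag c v)
                              (fsize c) (fst c)) w -> w != x.
  have [[_ [_ [ne_xd _]]] _] := maxd.
  by move=> fw; apply/eqP=> w_x; move: fw; rewrite w_x /is_frag /= fx eqxx => /esym.
do !split=> //; exists u, v; rewrite /= hu hv.
by rewrite (negbTE (not_x _ fa)) (negbTE (not_x _ fb)).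
Qed.

Lemma work_incoming_init : work_incoming (init_config n).
Proof. by move=> x y []. Qed.

Lemma work_incoming_next (c c' : config n) :
  work_incoming c -> step_or_stay c c' -> work_incoming c'.
Proof.
move=> inc; case=> [[x _ _ _ inc_x|x d fx wx _ _|x d fx wx maxd passive] | ->] //.
- move=> y z [fy]; rewrite /= /upd.
  by case: eqP => [-> _|_ wy]; [apply: inc_x | apply: inc].
- move=> y z [fy]; rewrite /= /upd; case: eqP => // yx wy nyz.
  have zx : z != x.
    apply/eqP=> z_x; apply: (work_incoming_no_work_neighbor inc (conj fy wy) nyz).
    by rewrite z_x.
  by rewrite /fid_lt /upd /= (negbTE zx); case: eqP => // _; apply: inc.
- move=> y z wy nyz.
  have frag_prev := is_frag_prev (or_introl (step_join fx wx maxd passive)).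
  have [fy wy'] : in_work c y by case: wy => /frag_prev.
  have fz : is_frag c z := frag_prev _ (proj1 (proj2 nyz)).
  case: nyz => _ [_ [ne [u [v [uv []]]]]] /=.
  have [nxd _] := maxd.
  case: eqP => [_ dy | ux hu].
    by case: (work_incoming_no_work_neighbor inc (conj fx wx) nxd); rewrite dy.
  case: eqP => [vx _ | _ hv].
    have nyx : neighbor adj c y x by do !split=> //; [rewrite -hu | exists u, v].
    by case: (work_incoming_no_work_neighbor inc (conj fy wy') nyx).
  by apply: inc => //; do !split=> //; exists u, v.
Qed.

Lemma leave_work_wait (c c' : config n) y :
  work_incoming c -> step_or_stay c c' ->
  in_work c y -> ~ in_work c' y -> fst c' (frag c' y) = Wait.
Proof.
move=> inc; case=> [[x _ _ _ _|x d _ _ _ _|x d fx wx [nxd _] _] | ->] [fy wy] not_work /=.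
- by case: not_work; split=> //=; rewrite /upd; case: eqP.
- by rewrite fy /upd; case: eqP => // yx; case: not_work; split=> //=; rewrite /upd; case: eqP.
- rewrite fy; case: eqP => [_ | y_ne_x]; last first.
    by case: not_work; split=> //; rewrite /is_frag /= fy; case: eqP.
  case fd: (fst c d) => //; case: (work_incoming_no_work_neighbor inc (conj fx wx) nxd).
  by split=> //; case: nxd => _ [].
- by case: not_work.
Qed.

Lemma start_work_no_work_neighbor (c c' : config n) x y :
  work_incoming c -> step_or_stay c c' ->
  fst c x = Wait -> fst c' x = Work -> neighbor adj c x y -> ~ in_work c y.
Proof.
move=> inc cc' wait_x work_x nxy wy.
apply: fid_lt_asym (inc _ _ wy (neighbor_sym nxy)) _.
move: cc' work_x; case=> [[x0 _ _ _ inc_x0|x0|x0] | ->] /=; rewrite /upd ?wait_x //.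
- by case: eqP => // xx0 _; rewrite xx0 in nxy *; apply: inc_x0.
- by case: eqP.
Qed.

Variable e : nat -> config n.
Hypothesis exec : execution adj X e.

Lemma execution_work_incoming k : work_incoming (e k).
Proof.
case: exec => e0 steps.
elim: k => [|k IH]; first by rewrite e0; apply: work_incoming_init.
exact: work_incoming_next (steps k).
Qed.

Lemma execution_is_frag_prev k k' z :
  (k <= k')%N -> is_frag (e k') z -> is_frag (e k) z.
Proof.
elim: k' => [|k' IH] le_kk' fz; first by have -> : k = 0%N by lia.
case: (ltnP k k'.+1) => [lt_k|ge_k]; last by have -> : k = k'.+1 by lia.
by apply: IH; [lia | apply: is_frag_prev (proj2 exec k') fz].
Qed.

Lemma execution_neighbor_persists t k a b :
  (forall j, (t <= j <= k)%N -> is_frag (e j) a /\ is_frag (e j) b) ->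
  (t <= k)%N -> neighbor adj (e t) a b -> neighbor adj (e k) a b.
Proof.
elim: k => [|k IH] frags le_tk nab; first by have <- : t = 0%N by lia.
case: (ltnP t k.+1) => [lt_tk|]; last by move=> le_kt; have <- : t = k.+1 by lia.
have [fa fb] := frags k.+1 ltac:(lia).
apply: neighbor_next (proj2 exec k) fa fb _.
by apply: IH => // j hj; apply: frags; lia.
Qed.

Lemma neighbor_stops_working_before t t' F F' :
  fst (e t) F = Wait -> neighbor adj (e t) F F' -> (t <= t')%N -> in_work (e t') F ->
  ~ (forall k, (t <= k <= t')%N -> in_work (e k) F').
Proof.
move=> wait_F nFF' le_tt' work_F always_work.
have [|j [lt_j wait_until_j start_j]] := first_exit (fun k => fst (e k) F = Wait) t t' wait_F.
  by move=> all_wait; case: work_F => _; rewrite all_wait //; lia.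
have nFF'_j : neighbor adj (e j) F F'.
  apply: execution_neighbor_persists nFF'; last lia.
  move=> k hk; split; last by have [] : in_work (e k) F' by apply: always_work; lia.
  by apply: (execution_is_frag_prev k _ (proj1 work_F)); lia.
have wait_Fj : fst (e j) F = Wait by apply: wait_until_j; lia.
have start_F : fst (e j.+1) F = Work by case: (fst (e j.+1) F) start_j.
apply: (start_work_no_work_neighbor (@execution_work_incoming j) (proj2 exec j)
          wait_Fj start_F nFF'_j).
by apply: always_work; lia.
Qed.

End Invariant.

Theorem corollary4 (R : realFieldType) (X : R) (n : nat) (adj : rel 'I_n) :
  (1 < X)%R -> symmetric adj -> irreflexive adj -> (forall u v, connect adj u v) ->
  forall (e : nat -> config n), execution adj X e ->
  forall (t : nat) (F F' : 'I_n),
    in_wait (e t) F -> in_work (e t) F' -> neighbor adj (e t) F F' ->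
    forall t' : nat, (t < t')%N -> in_work (e t') F ->
    exists s : nat, (t <= s < t')%N /\
      (forall k, (t <= k <= s)%N -> in_work (e k) F') /\
      fst (e s.+1) (frag (e s.+1) F') = Wait.
Proof.
move=> _ adj_sym _ _ e exec t F F' [_ wait_F] work_F' nFF' t' lt_tt' work_F.
have := neighbor_stops_working_before adj_sym exec t t' wait_F nFF' (ltnW lt_tt') work_F.
move=> /(first_exit (fun k => in_work (e k) F') t t' work_F') [s [lt_s work_s leave_s]].
exists s; split=> //; split=> //.
have inc_s := execution_work_incoming adj_sym exec s.
apply: (leave_work_wait adj_sym inc_s (proj2 exec s) _ leave_s).
by apply: work_s; lia.
Qed.
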